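(* Let $q$ be an odd prime power and $n\ge 1$. If $A\subset\mathbb{F}_q^n$ satisfies \[ |A|>2\binom{n+q-1}{q-1}+2\binom{n+\frac{q-1}{2}}{\frac{q-1}{2}}+2, \] then $A$ contains a right angle.
   Context: $\mathbb{F}_q^n$ carries the standard bilinear form $\langle u,v\rangle=\sum_{i=1}^n u_iv_i$. A right angle in $\mathbb{F}_q^n$ is a triple $x,y,z\in\mathbb{F}_q^n$ of pairwise distinct elements satisfying $\langle x-y,x-z\rangle=0$. *)

From HB Require Import structures.
From mathcomp Require Import all_boot all_order all_algebra all_field.
Set Implicit Arguments. Unset Strict Implicit. Unset Printing Implicit Defensive.
Import GRing.Theory.
Local Open Scope ring_scope.

Definition bform (F : fieldType) (n : nat) (u v : 'rV[F]_n) : F :=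
  \sum_(i < n) u 0 i * v 0 i.

Definition right_angle (F : fieldType) (n : nat) (x y z : 'rV[F]_n) : Prop :=
  [/\ x <> y, x <> z, y <> z & bform (x - y) (x - z) = 0].

From HB Require Import structures.
From mathcomp Require Import all_boot all_order all_algebra all_field.
From Stdlib Require Import Classical.
From mathcomp Require Import zify.
Set Implicit Arguments. Unset Strict Implicit. Unset Printing Implicit Defensive.
Import GRing.Theory.
Local Open Scope ring_scope.

(* Fix x0 in A and put B = A - x0. A right angle at a in A with legs through x0
   and b is a zero of <a - x0, a - b> = <u, u - v> with u = a - x0, v = b - x0.
   If there is none, then since z^(q-1) = 1 for z <> 0, the functions
   v |-> 1 - <u, u - v>^(q-1), for u in B, are the indicator functions of the
   points of B. Each is a polynomial of degree at most q-1 in v, so they form a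
   linearly independent family in a space of dimension C(n+q-1, q-1), whence
   |A| - 1 <= C(n+q-1, q-1). *)

Section DeltaFamily.
Variables (F : fieldType) (T : Type) (K : finType).

Lemma card_le_delta_span N (S : {set K}) (x : 'I_N -> T) (g : K -> T -> F)
    (c : 'I_N -> K -> F) :
  (forall i j, \sum_(k in S) c i k * g k (x j) = (i == j)%:R) -> (N <= #|S|)%N.
Proof.
move=> delta.
pose P : 'M[F]_(N, #|S|) := \matrix_(i, k) c i (enum_val k).
pose Q : 'M[F]_(#|S|, N) := \matrix_(k, j) g (enum_val k) (x j).
have PQ : P *m Q = 1%:M.
  apply/matrixP => i j; rewrite !mxE -delta.
  under eq_bigr do rewrite !mxE.
  by rewrite (big_enum_val (A := pred_of_set S) (fun k => c i k * g k (x j))).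
by rewrite -(mxrank1 F N) -PQ mulmx_max_rank.
Qed.
End DeltaFamily.

Section MonomialExpansion.
Variables (R : comPzRingType) (m d : nat).

Definition sorted_tuples := [set t : d.-tuple 'I_m | sorted leq (map val t)].

Lemma sorted_codom_size (f : {ffun 'I_d -> 'I_m}) :
  size (sort (relpre val leq) (codom f)) == d.
Proof. by rewrite size_sort size_codom card_ord. Qed.

Definition sorted_codom f : d.-tuple 'I_m := Tuple (sorted_codom_size f).

Lemma sorted_codom_in f : sorted_codom f \in sorted_tuples.
Proof. by rewrite inE /= -sort_map; apply/sort_sorted/leq_total. Qed.

Definition monomial (t : seq 'I_m) (y : 'I_m -> R) := \prod_(j <- t) y j.

Definition monomial_coef (c : 'I_m -> R) (t : d.-tuple 'I_m) :=
  \sum_(f | sorted_codom f == t) \prod_(i < d) c (f i).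

Lemma monomial_sorted_codom f y :
  monomial (sorted_codom f) y = \prod_(i < d) y (f i).
Proof.
rewrite /monomial (perm_big (codom f)) ?perm_sort //.
by rewrite codomE big_map big_enum.
Qed.

Lemma exprn_sum_monomials (c y : 'I_m -> R) :
  (\sum_j c j * y j) ^+ d =
  \sum_(t in sorted_tuples) monomial_coef c t * monomial t y.
Proof.
rewrite -[d in LHS]card_ord -prodr_const bigA_distr_bigA /=.
rewrite (partition_big sorted_codom (mem sorted_tuples)) /=; last first.
  by move=> f _; apply: sorted_codom_in.
apply: eq_bigr => t _; rewrite big_distrl /=; apply: eq_bigr => f /eqP <-.
by rewrite big_split /= monomial_sorted_codom.
Qed.

End MonomialExpansion.

Section HomogeneousCoordinates.
Variables (F : fieldType) (n : nat).

(* The point (1, v) of F^(n+1): polynomials of degree at most d in v are forms of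
   degree d in [homog v]. *)
Definition homog (v : 'rV[F]_n) (j : 'I_n.+1) : F :=
  if unlift ord0 j is Some k then v 0 k else 1.

Definition bform_coef (u : 'rV[F]_n) (j : 'I_n.+1) : F :=
  if unlift ord0 j is Some k then - u 0 k else bform u u.

Lemma bform_subr_homog u v :
  bform u (u - v) = \sum_j bform_coef u j * homog v j.
Proof.
rewrite big_ord_recl /bform_coef /homog unlift_none mulr1.
under eq_bigr do rewrite liftK mulNr.
rewrite sumrN /bform -sumrB.
by apply: eq_bigr => i _; rewrite !mxE mulrBr.
Qed.

Lemma monomial_homog_const d v : monomial (nseq d ord0) (homog v) = 1.
Proof.
rewrite /monomial big1_seq // => j /andP[_]; rewrite mem_nseq => /andP[_ /eqP ->].
by rewrite /homog unlift_none.
Qed.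

Lemma one_sub_bform_exp_expansion d u v :
  1 - bform u (u - v) ^+ d =
  \sum_(t in sorted_tuples n.+1 d)
    ((t == nseq_tuple d ord0)%:R - monomial_coef (bform_coef u) t)
      * monomial t (homog v).
Proof.
rewrite bform_subr_homog exprn_sum_monomials.
under [in RHS]eq_bigr do rewrite mulrBl.
rewrite sumrB; congr (_ - _).
rewrite (bigD1 (nseq_tuple d ord0)) /=; last first.
  by rewrite inE map_nseq; case: d => //= d; elim: d.
rewrite eqxx mul1r monomial_homog_const big1 ?addr0 // => t /andP[_ /negbTE ->].
exact: mul0r.
Qed.

End HomogeneousCoordinates.

Lemma expf_card_pred (F : finFieldType) (z : F) : z != 0 -> z ^+ #|F|.-1 = 1.
Proof.
move=> z_neq0; apply: (mulIf z_neq0).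
by rewrite mul1r -exprSr prednK ?expf_card // ltnW ?finNzRing_gt1.
Qed.

Section FiniteField.
Variables (F : finFieldType) (n : nat).

Lemma card_bform_subr_neq0 (B : {set 'rV[F]_n}) :
  {in B &, forall u v, u != v -> bform u (u - v) != 0} ->
  (#|B| <= 'C(#|F|.-1 + n, #|F|.-1))%N.
Proof.
move=> Bf; rewrite -card_sorted_tuples.
apply: (card_le_delta_span (S := sorted_tuples n.+1 #|F|.-1)
  (x := @enum_val _ (pred_of_set B)) (g := fun t v => monomial t (homog v))
  (c := fun i t =>
     (t == nseq_tuple _ ord0)%:R - monomial_coef (bform_coef (enum_val i)) t)).
move=> i j; rewrite -one_sub_bform_exp_expansion.
have [<- | ij] := eqVneq i j.
  rewrite subrr /bform big1 => [|k _]; last by rewrite mxE mulr0.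
  by rewrite expr0n -subn1 subn_eq0 leqNgt finNzRing_gt1 subr0.
rewrite expf_card_pred ?subrr // Bf ?enum_valP //.
by rewrite (inj_eq enum_val_inj).
Qed.

Lemma card_right_angle_free (A : {set 'rV[F]_n}) :
  ~ (exists x y z, [/\ x \in A, y \in A, z \in A & right_angle x y z]) ->
  (#|A| <= 'C(#|F|.-1 + n, #|F|.-1) + 1)%N.
Proof.
move=> noRA; have [-> | [x0 Ax0]] := set_0Vmem A; first by rewrite cards0.
rewrite (cardsD1 x0) Ax0 addnC leq_add2r -(card_imset _ (addIr (- x0))).
apply: card_bform_subr_neq0 => _ _ /imsetP[a Aa ->] /imsetP[b Ab ->] ab.
rewrite opprB addrA subrK; apply/eqP => bf0; apply: noRA.
move: Aa Ab; rewrite !inE => /andP[ax0 Aa] /andP[bx0 Ab].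
exists a, x0, b; split=> //.
split=> [|eq_ab|eq_x0b|//]; first exact/eqP.
- by rewrite eq_ab eqxx in ab.
- by rewrite eq_x0b eqxx in bx0.
Qed.

End FiniteField.

Theorem theorem1 (F : finFieldType) (n : nat) (A : {set 'rV[F]_n}) :
  odd #|F| -> (1 <= n)%N ->
  (2 * 'C(n + #|F| - 1, #|F| - 1) + 2 * 'C(n + (#|F| - 1) %/ 2, (#|F| - 1) %/ 2) + 2
     < #|A|)%N ->
  exists x y z, [/\ x \in A, y \in A, z \in A & right_angle x y z].
Proof.
move=> _ _ A_large; apply: NNPP => /card_right_angle_free.
have F_gt0 : (0 < #|F|)%N by rewrite ltnW ?finNzRing_gt1.
have -> : (#|F|.-1 + n = n + #|F| - 1)%N by lia.
rewrite -subn1; lia.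
Qed.
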